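(* Let $G=(G_{ij})_{1\le i,j\le n}$ be a real symmetric matrix and $f\in\{1,\dots,n\}$ such that $G_{ff}=0$, $G_{ij}=0$ whenever $i<f<j$, and the principal submatrices $G'$ on $\{1,\dots,f-1\}$ and $G''$ on $\{f+1,\dots,n\}$ are Gram matrices of simple roots of semisimple Lie algebras $\mathfrak g',\mathfrak g''$ (hence positive definite) whose long roots have squared length $2d'$ resp. $2d''$. For $r',r''\in\mathbb R$ define $m^S_{ij}=r'G_{ij}$ if $i,j\le f$ and $(i,j)\ne(f,f)$; $m^S_{ij}=r''G_{ij}$ if $i,j\ge f$ and $(i,j)\neq(f,f)$; $m^S_{ij}=0$ if $i<f<j$ or $j<f<i$; $m^S_{ff}=1$. If $0<r'\le\frac1{2d'}$, $0<r''\le\frac1{2d''}$ and $\det(m^S)>0$, then $m^S$ is positive definite and $m^S_{ii}\le1$ for all $i$ (so smallness holds and all Nichols algebra relations of $\mathcal B(q)$, $q_{ij}=e^{i\pi m^S_{ij}}$, hold for the corresponding screening operators).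
   Context: This is the Gram matrix in the standard chamber associated to a basic classical Lie superalgebra with a single fermionic simple root $\alpha_f$; $G_{ij}=(\alpha_i,\alpha_j)$. The consequence uses the criterion: positive definiteness and $m_{ii}\le1$ imply that all relations of the diagonal Nichols algebra hold for the Heisenberg screening operators. *)

(* Indices 1..n of the paper are 'I_n (0-based) here. *)
From HB Require Import structures.
From mathcomp Require Import all_boot all_order all_algebra.
Set Implicit Arguments. Unset Strict Implicit. Unset Printing Implicit Defensive.
Import Order.TTheory GRing.Theory Num.Theory.
Local Open Scope ring_scope.

Definition posdef (R : realFieldType) (k : nat) (M : 'M[R]_k) : Prop :=
  forall x : 'cV[R]_k, x != 0 -> 0 < (x^T *m M *m x) 0 0.

(* Gram matrix of the simple roots of a (possibly zero) semisimple Lie algebra,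
   i.e. a symmetrised Cartan matrix of finite type: symmetric, positive
   definite, and the Cartan integers 2 (a_i,a_j)/(a_i,a_i), i <> j, are
   nonpositive integers.  "Long roots have squared length 2d": the maximal
   squared length of a (simple) root is 2d. *)
Definition simple_root_gram (R : realFieldType) (k : nat) (M : 'M[R]_k) (d : R) : Prop :=
  [/\ M^T = M, posdef M,
      (forall i j : 'I_k, i != j -> exists c : nat, 2 * M i j / M i i = - c%:R),
      (forall i : 'I_k, M i i <= 2 * d) &
      (0 < k)%N -> exists i : 'I_k, M i i = 2 * d].

Lemma lo_idx_proof (n : nat) (f : 'I_n) (i : 'I_f) : (i < n)%N.
Proof. exact: ltn_trans (ltn_ord i) (ltn_ord f). Qed.

Lemma hi_idx_proof (n : nat) (f : 'I_n) (i : 'I_(n - f.+1)) : (f.+1 + i < n)%N.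
Proof. by rewrite -ltn_subRL. Qed.

Definition lo_idx (n : nat) (f : 'I_n) (i : 'I_f) : 'I_n := Ordinal (lo_idx_proof i).
Definition hi_idx (n : nat) (f : 'I_n) (i : 'I_(n - f.+1)) : 'I_n := Ordinal (hi_idx_proof i).

Definition sub_lo (R : realFieldType) (n : nat) (G : 'M[R]_n) (f : 'I_n) : 'M[R]_f :=
  \matrix_(i, j) G (lo_idx i) (lo_idx j).
Definition sub_hi (R : realFieldType) (n : nat) (G : 'M[R]_n) (f : 'I_n) : 'M[R]_(n - f.+1) :=
  \matrix_(i, j) G (hi_idx i) (hi_idx j).

Definition mS (R : realFieldType) (n : nat) (G : 'M[R]_n) (f : 'I_n) (r1 r2 : R) : 'M[R]_n :=
  \matrix_(i, j)
    if (i == f) && (j == f) then 1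
    else if ((i <= f)%N && (j <= f)%N) then r1 * G i j
    else if ((f <= i)%N && (f <= j)%N) then r2 * G i j
    else 0.

From HB Require Import structures.
From mathcomp Require Import all_boot all_order all_algebra.
From mathcomp Require Import zify ring lra.
Set Implicit Arguments. Unset Strict Implicit. Unset Printing Implicit Defensive.
Import Order.TTheory GRing.Theory Num.Theory.
Local Open Scope ring_scope.

(* Deleting the pivot row and column f of m^S leaves the block-diagonal matrix
   diag(r' G', r'' G''), which is positive definite.  A symmetric matrix M whose
   pivot minor M' is positive definite is itself positive definite once
   det M > 0: with t = det M / det M' > 0 the matrix N = M - t e_f e_f^T is
   singular, its kernel vector has a nonzero pivot coordinate, hence N is
   positive semidefinite and M = N + t e_f e_f^T is definite.  The same
   perturbation, by induction, gives det M' > 0.  The diagonal bound is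
   r G_ii <= r 2d <= 1. *)

Section QuadraticForms.
Variable R : realFieldType.

Definition qform k (M : 'M[R]_k) (x : 'cV[R]_k) : R := (x^T *m M *m x) 0 0.

Lemma qformE k (M : 'M[R]_k) x :
  qform M x = \sum_i \sum_j x i 0 * M i j * x j 0.
Proof.
rewrite /qform mxE exchange_big; apply: eq_bigr => i _.
rewrite mxE mulr_suml; apply: eq_bigr => j _.
by rewrite !mxE.
Qed.

Lemma qform0 k (M : 'M[R]_k) : qform M 0 = 0.
Proof. by rewrite /qform mulmx0 mxE. Qed.

Lemma qform_ge0 k (M : 'M[R]_k) x : posdef M -> 0 <= qform M x.
Proof.
move=> pM; have [->|x0] := eqVneq x 0; first by rewrite qform0.
exact/ltW/pM.
Qed.

Lemma posdef_diag_gt0 k (M : 'M[R]_k) i : posdef M -> 0 < M i i.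
Proof.
move=> pM; have e_neq0 : delta_mx i 0 != 0 :> 'cV[R]_k.
  by apply/negP => /eqP/matrixP/(_ i 0); rewrite !mxE !eqxx => /eqP; rewrite oner_eq0.
by have := pM _ e_neq0; rewrite trmx_delta -rowE -colE !mxE.
Qed.

Lemma qform_sub_delta k (M : 'M[R]_k) f t x :
  qform (M - t *: delta_mx f f) x = qform M x - t * x f 0 ^+ 2.
Proof.
have -> : x f 0 ^+ 2 = (x^T *m delta_mx f f *m x) 0 0.
  rewrite -(mul_delta_mx (0 : 'I_1)) mulmxA -colE -mulmxA -rowE !mxE big_ord1.
  by rewrite !mxE expr2.
by rewrite /qform mulmxBr mulmxBl -scalemxAr -scalemxAl !mxE.
Qed.

Lemma det_sub_delta k (M : 'M[R]_k) f t :
  \det (M - t *: delta_mx f f) = \det M - t * \det (row' f (col' f M)).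
Proof.
rewrite (expand_det_row _ f) (expand_det_row M f).
have same_cofactor j : cofactor (M - t *: delta_mx f f) f j = cofactor M f j.
  rewrite /cofactor; congr (_ * \det _); apply/matrixP => a b.
  by rewrite !mxE eq_sym (negbTE (neq_lift f a)) mulr0 subr0.
under eq_bigr do rewrite same_cofactor !mxE eqxx /= mulrBl.
rewrite sumrB; congr (_ - _); rewrite (bigD1 f) //= eqxx mulr1 big1 ?addr0.
  by rewrite /cofactor -signr_odd oddD addbb expr0 mul1r.
by move=> j /negbTE ->; rewrite mulr0 mul0r.
Qed.

Lemma sub_delta_kernel k (M : 'M[R]_k.+1) f :
  \det (row' f (col' f M)) != 0 ->
  exists2 v : 'rV[R]_k.+1, v != 0 &
    v *m (M - (\det M / \det (row' f (col' f M))) *: delta_mx f f) = 0.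
Proof.
move=> c_neq0; apply/det0P.
by rewrite det_sub_delta divfK // subrr.
Qed.

Section Embedding.
Variables (k : nat) (f : 'I_k.+1).

Definition embed_mx : 'M[R]_(k.+1, k) := col' f 1%:M.

Lemma tr_embed_mul m (X : 'M[R]_(k.+1, m)) : embed_mx^T *m X = row' f X.
Proof.
apply/matrixP => i j; rewrite !mxE (bigD1 (lift f i)) //= !mxE eqxx mul1r.
by rewrite big1 ?addr0 // => a /negbTE ne_a; rewrite !mxE ne_a mul0r.
Qed.

Lemma mul_embed_mx m (X : 'M[R]_(m, k.+1)) : X *m embed_mx = col' f X.
Proof.
apply/matrixP => i j; rewrite !mxE (bigD1 (lift f j)) //= !mxE eqxx mulr1.
by rewrite big1 ?addr0 // => a /negbTE ne_a; rewrite !mxE ne_a mulr0.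
Qed.

Lemma tr_embed_mulK : embed_mx^T *m embed_mx = 1%:M.
Proof.
by apply/matrixP => i j; rewrite tr_embed_mul !mxE (inj_eq (@lift_inj _ f)).
Qed.

Lemma qform_minor (M : 'M[R]_k.+1) y :
  qform (row' f (col' f M)) y = qform M (embed_mx *m y).
Proof. by rewrite /qform -mul_embed_mx -tr_embed_mul trmx_mul !mulmxA. Qed.

Lemma embed_mx_neq0 (y : 'cV[R]_k) : y != 0 -> embed_mx *m y != 0.
Proof.
apply: contra => /eqP y0; apply/eqP.
by rewrite -[y]mul1mx -tr_embed_mulK -mulmxA y0 mulmx0.
Qed.

Lemma embed_mx_pivot (y : 'cV[R]_k) : (embed_mx *m y) f 0 = 0.
Proof.
rewrite !mxE big1 // => j _.
by rewrite !mxE (negbTE (neq_lift f j)) mul0r.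
Qed.

Lemma embed_mx_trK (x : 'cV[R]_k.+1) :
  x f 0 = 0 -> embed_mx *m (embed_mx^T *m x) = x.
Proof.
move=> xf0; apply/matrixP => i j; rewrite (ord1 j).
case: (unliftP f i) => [a ->|->]; last by rewrite embed_mx_pivot.
rewrite tr_embed_mul !mxE (bigD1 a) //= !mxE eqxx mul1r big1 ?addr0 // => b ne_b.
by rewrite !mxE (inj_eq (@lift_inj _ f)) eq_sym (negbTE ne_b) mul0r.
Qed.

Lemma posdef_minorE (M : 'M[R]_k.+1) :
  posdef (row' f (col' f M)) <->
  (forall x : 'cV[R]_k.+1, x f 0 = 0 -> x != 0 -> 0 < qform M x).
Proof.
split=> [pM' x xf0 x0 | pM y y0].
- rewrite -(embed_mx_trK xf0) -qform_minor; apply: pM'.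
  by apply: contra x0 => /eqP y0; rewrite -(embed_mx_trK xf0) y0 mulmx0.
- by rewrite -/(qform _ _) qform_minor; apply: pM (embed_mx_pivot y) (embed_mx_neq0 y0).
Qed.

End Embedding.

Lemma posdef_minor k (M : 'M[R]_k.+1) f :
  posdef M -> posdef (row' f (col' f M)).
Proof. by move=> pM; apply/posdef_minorE => x _; apply: pM. Qed.

Lemma posdef_det_gt0 k (M : 'M[R]_k) : posdef M -> 0 < \det M.
Proof.
elim: k M => [|k IH] M pM; first by rewrite det_mx00.
have c_gt0 := IH _ (@posdef_minor _ M 0 pM).
rewrite ltNge; apply/negP => det_le0.
have [v v0 vN] := sub_delta_kernel (lt0r_neq0 c_gt0).
set t := _ / _ in vN.
have t_le0 : t <= 0 by rewrite /t pmulr_lle0 ?invr_gt0.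
have : qform M v^T - t * v^T 0 0 ^+ 2 = 0.
  by rewrite -qform_sub_delta /qform trmxK vN mul0mx mxE.
have := pM v^T; rewrite trmx_eq0 -/(qform _ _) => /(_ v0).
have : 0 <= - t * v^T 0 0 ^+ 2 by rewrite mulr_ge0 ?sqr_ge0 ?oppr_ge0.
rewrite mulNr; lra.
Qed.

Lemma qform_kernel_shift k (N : 'M[R]_k) z a x :
  N^T = N -> N *m z = 0 -> qform N (x + a *: z) = qform N x.
Proof.
move=> NT Nz.
have zN : z^T *m N = 0 by rewrite -NT -trmx_mul Nz trmx0.
rewrite /qform -mulmxA mulmxDr -scalemxAr Nz scaler0 addr0 mulmxA.
have -> : (x + a *: z)^T = x^T + a *: z^T by rewrite linearD linearZ.
by rewrite mulmxDl mulmxDl -scalemxAl -scalemxAl zN mul0mx scaler0 addr0.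
Qed.

Lemma posdef_of_minor k (M : 'M[R]_k.+1) f :
  M^T = M -> posdef (row' f (col' f M)) -> 0 < \det M -> posdef M.
Proof.
move=> MT pM' det_gt0.
have hyperplane_gt0 := iffLR (posdef_minorE f M) pM'.
have c_gt0 := posdef_det_gt0 pM'.
have [v v0 vN] := sub_delta_kernel (lt0r_neq0 c_gt0).
set t := _ / _ in vN; set N := M - t *: delta_mx f f in vN.
have t_gt0 : 0 < t by rewrite divr_gt0.
have NT : N^T = N.
  by rewrite /N linearB linearZ /= MT trmx_delta.
have [z z0 Nz] : exists2 z : 'cV[R]_k.+1, z != 0 & N *m z = 0.
  by exists v^T; rewrite ?trmx_eq0 // -NT -trmx_mul vN trmx0.
have zf_neq0 : z f 0 != 0.
  apply/negP => /eqP zf0.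
  have : qform N z = 0 by rewrite /qform -mulmxA Nz mulmx0 mxE.
  rewrite qform_sub_delta zf0 expr0n mulr0 subr0.
  by move/eqP; rewrite gt_eqF // hyperplane_gt0.
(* Shifting x along the kernel vector z clears its pivot coordinate without
   changing the form of N. *)
have N_ge0 x : 0 <= qform N x.
  set w := x + (- (x f 0 / z f 0)) *: z.
  have wf0 : w f 0 = 0 by rewrite /w !mxE mulNr divfK // subrr.
  rewrite -(qform_kernel_shift (- (x f 0 / z f 0)) x NT Nz) -/w.
  rewrite qform_sub_delta wf0 expr0n mulr0 subr0.
  have [->|w0] := eqVneq w 0; first by rewrite qform0.
  exact/ltW/hyperplane_gt0.
move=> x x0; rewrite -/(qform _ _).
have -> : qform M x = qform N x + t * x f 0 ^+ 2 by rewrite qform_sub_delta subrK.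
have [xf0|xf_neq0] := eqVneq (x f 0) 0.
  by rewrite xf0 expr0n mulr0 addr0 qform_sub_delta xf0 expr0n mulr0 subr0 hyperplane_gt0.
by rewrite ltr_wpDl // mulr_gt0 // exprn_even_gt0.
Qed.

End QuadraticForms.

Section SplitIndex.
Variables (n : nat) (f : 'I_n).

Variant split_idx_spec : 'I_n -> Type :=
  | SplitLo (a : 'I_f) : split_idx_spec (lo_idx a)
  | SplitPivot : split_idx_spec f
  | SplitHi (b : 'I_(n - f.+1)) : split_idx_spec (hi_idx b).

Lemma split_idxP i : split_idx_spec i.
Proof.
case: (ltngtP i f) => [lt_if|lt_fi|/val_inj ->]; last exact: SplitPivot.
- have -> : i = lo_idx (Ordinal lt_if) by apply: val_inj.
  exact: SplitLo.
- have lt_b : (i - f.+1 < n - f.+1)%N by have := ltn_ord i; lia.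
  have -> : i = hi_idx (Ordinal lt_b) by apply: val_inj => /=; lia.
  exact: SplitHi.
Qed.

Lemma lo_idx_lt (a : 'I_f) : (lo_idx a < f)%N. Proof. exact: (ltn_ord a). Qed.

Lemma lo_idx_eqF (a : 'I_f) : (lo_idx a == f) = false.
Proof. exact: ltn_eqF (lo_idx_lt a). Qed.

Lemma lo_idx_leq (a : 'I_f) : (lo_idx a <= f)%N.
Proof. exact: ltnW (lo_idx_lt a). Qed.

Lemma lo_idx_geqF (a : 'I_f) : (f <= lo_idx a)%N = false.
Proof. by rewrite leqNgt lo_idx_lt. Qed.

Lemma hi_idx_gt (b : 'I_(n - f.+1)) : (f < hi_idx b)%N. Proof. exact: leq_addr. Qed.

Lemma hi_idx_eqF (b : 'I_(n - f.+1)) : (hi_idx b == f) = false.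
Proof. exact: gtn_eqF (hi_idx_gt b). Qed.

Lemma hi_idx_geq (b : 'I_(n - f.+1)) : (f <= hi_idx b)%N.
Proof. exact: ltnW (hi_idx_gt b). Qed.

Lemma hi_idx_leqF (b : 'I_(n - f.+1)) : (hi_idx b <= f)%N = false.
Proof. by rewrite leqNgt hi_idx_gt. Qed.

Lemma big_ord_split_at (V : nmodType) (F : 'I_n -> V) :
  \sum_(i < n) F i =
  \sum_(a < f) F (lo_idx a) + F f + \sum_(b < n - f.+1) F (hi_idx b).
Proof.
pose G (i : nat) := F (insubd f i).
have FG (i : 'I_n) : F i = G i.
  by rewrite /G; congr F; apply: val_inj; rewrite val_insubd ltn_ord.
rewrite (eq_bigr (G \o val)) => [|i _]; last exact: FG.
rewrite -(big_mkord xpredT G) (big_cat_nat (leq0n f) (ltnW (ltn_ord f))) /=.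
rewrite (big_cat_nat (leqnSn f) (ltn_ord f)) big_nat1 big_mkord addrA FG.
have -> : \sum_(f.+1 <= i < n) G i = \sum_(b < n - f.+1) G (b + f.+1)%N.
  by rewrite -{1}[f.+1]add0n big_addn big_mkord.
congr (_ + _ + _); apply: eq_bigr => i _; rewrite /G; congr F; apply: val_inj.
- by rewrite val_insubd /= (lo_idx_proof i).
- by rewrite val_insubd /= addnC (hi_idx_proof i).
Qed.

Definition lo_part (R : realFieldType) (x : 'cV[R]_n) : 'cV[R]_f :=
  \col_a x (lo_idx a) 0.
Definition hi_part (R : realFieldType) (x : 'cV[R]_n) : 'cV[R]_(n - f.+1) :=
  \col_b x (hi_idx b) 0.

Lemma split_parts_eq0 (R : realFieldType) (x : 'cV[R]_n) :
  x f 0 = 0 -> lo_part x = 0 -> hi_part x = 0 -> x = 0.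
Proof.
move=> xf0 /matrixP xlo0 /matrixP xhi0; apply/matrixP => i j; rewrite (ord1 j) mxE.
case: (split_idxP i) => [a|//|b].
- by have := xlo0 a 0; rewrite !mxE.
- by have := xhi0 b 0; rewrite !mxE.
Qed.

End SplitIndex.

Lemma mul_le1_of_le_inv (R : realFieldType) (r g c : R) :
  0 < g -> g <= c -> r <= 1 / c -> r * g <= 1.
Proof.
move=> g_gt0 g_le_c r_le; have c_gt0 := lt_le_trans g_gt0 g_le_c.
apply: le_trans (ler_wpM2r (ltW g_gt0) r_le) _.
by rewrite mul1r mulrC ler_pdivrMr // mul1r.
Qed.

Section ScaledGram.
Variables (R : realFieldType) (n : nat) (G : 'M[R]_n) (f : 'I_n) (r1 r2 : R).
Local Notation M := (mS G f r1 r2).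

Lemma mS_pivot : M f f = 1.
Proof. by rewrite mxE eqxx. Qed.

Lemma mS_lo (a b : 'I_f) : M (lo_idx a) (lo_idx b) = r1 * sub_lo G f a b.
Proof. by rewrite !mxE lo_idx_eqF !lo_idx_leq. Qed.

Lemma mS_hi (a b : 'I_(n - f.+1)) : M (hi_idx a) (hi_idx b) = r2 * sub_hi G f a b.
Proof. by rewrite !mxE hi_idx_eqF hi_idx_leqF !hi_idx_geq. Qed.

Lemma mS_lo_hi (a : 'I_f) (b : 'I_(n - f.+1)) : M (lo_idx a) (hi_idx b) = 0.
Proof. by rewrite !mxE lo_idx_eqF hi_idx_leqF lo_idx_geqF !andbF. Qed.

Lemma mS_hi_lo (b : 'I_(n - f.+1)) (a : 'I_f) : M (hi_idx b) (lo_idx a) = 0.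
Proof. by rewrite !mxE hi_idx_eqF hi_idx_leqF lo_idx_geqF !andbF. Qed.

Lemma mS_sym : G^T = G -> M^T = M.
Proof.
move=> GT; apply/matrixP => i j; rewrite !mxE.
have -> : G j i = G i j by rewrite -{1}GT mxE.
by rewrite (andbC (j == f)) (andbC (j <= f)%N) (andbC (f <= j)%N).
Qed.

Lemma qform_mS_pivot0 (x : 'cV[R]_n) : x f 0 = 0 ->
  qform M x = r1 * qform (sub_lo G f) (lo_part f x) + r2 * qform (sub_hi G f) (hi_part f x).
Proof.
move=> xf0; rewrite !qformE (big_ord_split_at f) [X in _ + X + _]big1 => [|i _]; last first.
  by rewrite xf0 !mul0r.
rewrite addr0 !mulr_sumr; congr (_ + _); apply: eq_bigr => a _.
- rewrite (big_ord_split_at f) xf0 mulr0 addr0 [X in _ + X]big1 ?addr0 => [|b _].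
    by rewrite mulr_sumr; apply: eq_bigr => b _; rewrite mS_lo !mxE; ring.
  by rewrite mS_lo_hi mulr0 mul0r.
- rewrite (big_ord_split_at f) xf0 mulr0 addr0 [X in X + _]big1 ?add0r => [|b _].
    by rewrite mulr_sumr; apply: eq_bigr => b _; rewrite mS_hi !mxE; ring.
  by rewrite mS_hi_lo mulr0 mul0r.
Qed.

Lemma mS_pivot0_gt0 (x : 'cV[R]_n) :
  posdef (sub_lo G f) -> posdef (sub_hi G f) -> 0 < r1 -> 0 < r2 ->
  x f 0 = 0 -> x != 0 -> 0 < qform M x.
Proof.
move=> pG1 pG2 r1_gt0 r2_gt0 xf0 x0; rewrite qform_mS_pivot0 //.
have q1_ge0 := qform_ge0 (lo_part f x) pG1; have q2_ge0 := qform_ge0 (hi_part f x) pG2.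
have [lo0|lo_neq0] := eqVneq (lo_part f x) 0; last first.
  by apply: ltr_pwDl; [exact: mulr_gt0 (pG1 _ lo_neq0) | exact: mulr_ge0 (ltW r2_gt0) q2_ge0].
have [hi0|hi_neq0] := eqVneq (hi_part f x) 0; last first.
  by apply: ltr_pwDr; [exact: mulr_gt0 (pG2 _ hi_neq0) | exact: mulr_ge0 (ltW r1_gt0) q1_ge0].
by rewrite (split_parts_eq0 xf0 lo0 hi0) eqxx in x0.
Qed.

Lemma mS_diag_le1 (d1 d2 : R) (i : 'I_n) :
  simple_root_gram (sub_lo G f) d1 -> simple_root_gram (sub_hi G f) d2 ->
  r1 <= 1 / (2 * d1) -> r2 <= 1 / (2 * d2) -> M i i <= 1.
Proof.
move=> [_ pG1 _ G1_le _] [_ pG2 _ G2_le _] r1_le r2_le.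
case: (split_idxP f i) => [a||b].
- by rewrite mS_lo; apply: mul_le1_of_le_inv (posdef_diag_gt0 a pG1) (G1_le a) r1_le.
- by rewrite mS_pivot.
- by rewrite mS_hi; apply: mul_le1_of_le_inv (posdef_diag_gt0 b pG2) (G2_le b) r2_le.
Qed.

End ScaledGram.

Theorem mainTheorem7 (R : realFieldType) (n : nat) (G : 'M[R]_n) (f : 'I_n)
  (d1 d2 r1 r2 : R) :
  G^T = G ->
  G f f = 0 ->
  (forall i j : 'I_n, (i < f)%N -> (f < j)%N -> G i j = 0) ->
  simple_root_gram (sub_lo G f) d1 ->
  simple_root_gram (sub_hi G f) d2 ->
  0 < r1 -> r1 <= 1 / (2 * d1) ->
  0 < r2 -> r2 <= 1 / (2 * d2) ->
  0 < \det (mS G f r1 r2) ->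
  posdef (mS G f r1 r2) /\ (forall i : 'I_n, mS G f r1 r2 i i <= 1).
Proof.
case: n G f => [|k] G f; first by case: f.
(* [G f f] and the entries of [G] between the blocks are irrelevant: [mS]
   overrides exactly these entries. *)
move=> GT _ _ G1 G2 r1_gt0 r1_le r2_gt0 r2_le det_gt0.
split; last by move=> i; apply: mS_diag_le1 G1 G2 r1_le r2_le.
have [[_ pG1 _ _ _] [_ pG2 _ _ _]] := (G1, G2).
apply: (posdef_of_minor (mS_sym f r1 r2 GT) _ det_gt0).
by apply/posdef_minorE => x; apply: mS_pivot0_gt0.
Qed.
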